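(* Assume the setting in the context and suppose real numbers $L_{jk}\le U_{jk}$ ($j,k\in\{1,\dots,m\}$) satisfy $L_{jk}\le c^*_{jk}\le U_{jk}$ for all $j,k$, for the covariance matrix $\boldsymbol\Sigma^*=(c^*_{jk})=\mathbf M(\mathbf d^* )^{-1}$ of every $\Phi_{\mathfrak B}$-optimal design $\mathbf d^*$. Consider the mixed-integer linear program in variables $\varphi\in\mathbb R$, $z_{ijk}\in\mathbb R$ ($i\in\{1,\dots,n\}$, $j,k\in\{1,\dots,m\}$), symmetric $\boldsymbol\Sigma=(c_{jk})\in\mathbb R^{m\times m}$ and $\mathbf d\in\{0,1\}^n$: minimize $\varphi$ subject to $\varphi\ge\mathrm{tr}(\mathbf B_\ell'\boldsymbol\Sigma\mathbf B_\ell)$ for all $\ell\in\{1,\dots,K\}$; $\sum_{i=1}^n\mathbf f_i\mathbf f_i'\mathbf Z_i=\mathbf I_m$, where $\mathbf Z_i$ is the $m\times m$ matrix with entries $(\mathbf Z_i)_{jk}=z_{ijk}$; $\sum_i d_i=N$; and for all $i,j,k$: $z_{ijk}-d_iL_{jk}\ge0$, $z_{ijk}-d_iU_{jk}-c_{jk}+U_{jk}\ge0$, $z_{ijk}-d_iU_{jk}\le0$, $z_{ijk}-d_iL_{jk}-c_{jk}+L_{jk}\le0$. Then (i) every feasible point satisfies $z_{ijk}=d_ic_{jk}$ for all $i,j,k$, $\mathbf M(\mathbf d)$ is nonsingular and $\boldsymbol\Sigma=\mathbf M(\mathbf d)^{-1}$; and (ii) the optimal value of this program equals the minimum of $\Phi_{\mathfrak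 B}(\mathbf M(\mathbf d))$ over designs with nonsingular $\mathbf M(\mathbf d)$, and the set of $\mathbf d$-components of optimal solutions of the program is exactly the set of $\Phi_{\mathfrak B}$-optimal designs.
   Context: Let $n,m,N,K$ be positive integers with $2\le m\le N\le n$, and let $\mathbf f_1,\dots,\mathbf f_n\in\mathbb R^m$ span $\mathbb R^m$. A (binary) design is $\mathbf d\in\{0,1\}^n$ with $\sum_i d_i=N$; its information matrix is $\mathbf M(\mathbf d)=\sum_{i=1}^n d_i\mathbf f_i\mathbf f_i'$. For $\ell\in\{1,\dots,K\}$ let $\mathbf B_\ell$ be a real $m\times s_\ell$ matrix, $\mathbf B=(\mathbf B_1,\dots,\mathbf B_K)$, with column space of $\mathbf B$ equal to $\mathbb R^m$ and no zero column. For positive definite $\mathbf M$, $\Phi_{\mathfrak B}(\mathbf M)=\max_{\ell}\mathrm{tr}(\mathbf B_\ell'\mathbf M^{-1}\mathbf B_\ell)$. A $\Phi_{\mathfrak B}$-optimal design minimizes $\Phi_{\mathfrak B}(\mathbf M(\mathbf d))$ over designs $\mathbf d$ with nonsingular $\mathbf M(\mathbf d)$. *)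

From HB Require Import structures.
From mathcomp Require Import all_boot all_order all_algebra.
Set Implicit Arguments. Unset Strict Implicit. Unset Printing Implicit Defensive.
Import Order.TTheory GRing.Theory Num.Theory.
Local Open Scope ring_scope.

Section Defs.
Variables (R : realFieldType) (n m K : nat).
Variable (s : 'I_K -> nat).

Definition infmx (f : 'I_n -> 'cV[R]_m) (d : 'I_n -> bool) : 'M[R]_m :=
  \sum_(i < n) (d i)%:R *: (f i *m (f i)^T).

Definition is_design (N : nat) (d : 'I_n -> bool) : Prop :=
  (\sum_(i < n) (d i : nat))%N = N.

(* Phi_B(M) = max_l tr(B_l' M^{-1} B_l)  (for K >= 1; the values are
   nonnegative for positive definite M, so the neutral element 0 of the
   iterated max is never the value when K >= 1 and M is positive definite) *)
Definition PhiB (B : forall l : 'I_K, 'M[R]_(m, s l)) (M : 'M[R]_m) : R :=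
  \big[Num.max/0]_(l < K) \tr ((B l)^T *m invmx M *m B l).

Definition Phi_optimal (f : 'I_n -> 'cV[R]_m)
  (B : forall l : 'I_K, 'M[R]_(m, s l)) (N : nat) (d : 'I_n -> bool) : Prop :=
  [/\ is_design N d, infmx f d \in unitmx &
      forall d' : 'I_n -> bool, is_design N d' -> infmx f d' \in unitmx ->
        PhiB B (infmx f d) <= PhiB B (infmx f d')].

Definition milp_feasible (f : 'I_n -> 'cV[R]_m)
  (B : forall l : 'I_K, 'M[R]_(m, s l)) (N : nat) (L U : 'M[R]_m)
  (phi : R) (Z : 'I_n -> 'M[R]_m) (Sigma : 'M[R]_m) (d : 'I_n -> bool) : Prop :=
  [/\ Sigma^T = Sigma,
      forall l : 'I_K, \tr ((B l)^T *m Sigma *m B l) <= phi,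
      \sum_(i < n) (f i *m (f i)^T) *m Z i = 1%:M,
      is_design N d &
      forall (i : 'I_n) (j k : 'I_m),
        [/\ 0 <= Z i j k - (d i)%:R * L j k,
            0 <= Z i j k - (d i)%:R * U j k - Sigma j k + U j k,
            Z i j k - (d i)%:R * U j k <= 0 &
            Z i j k - (d i)%:R * L j k - Sigma j k + L j k <= 0]].

Definition milp_optimal f B N L U phi Z Sigma d : Prop :=
  milp_feasible f B N L U phi Z Sigma d /\
  forall phi' Z' Sigma' d', milp_feasible f B N L U phi' Z' Sigma' d' -> phi <= phi'.

End Defs.

(* The proof has three ingredients.
   (a) Linearization: for a binary d_i, the four McCormick-type bounds on
       z_ijk force z_ijk = d_i c_jk; hence the matrix constraint
       sum_i f_i f_i' Z_i = I reads M(d) Sigma = I, so M(d) is invertible and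
       Sigma = M(d)^-1.  Conversely, a nonsingular design whose inverse
       information matrix lies between L and U yields a feasible point with
       phi = Phi_B(M(d)).
   (b) Positivity: M(d) is positive semidefinite, so tr(B_l' M(d)^-1 B_l) >= 0
       and the first constraint gives Phi_B(M(d)) <= phi at any feasible point.
   (c) Existence: since the f_i span R^m, some m of them form a basis; any
       N-subset containing them is a nonsingular design, and a Phi_B-optimal
       design exists because there are finitely many designs.
   By the hypothesis on L and U, every optimal design d0 gives a feasible
   point of value Phi_B(M(d0)), which by (a)-(b) bounds every feasible value
   from below; both statements of the theorem follow. *)

From HB Require Import structures.
From mathcomp Require Import all_boot all_order all_algebra zify lra.
Set Implicit Arguments. Unset Strict Implicit. Unset Printing Implicit Defensive.
Import Order.TTheory GRing.Theory Num.Theory.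
Local Open Scope ring_scope.

Section InformationMatrix.
Variables (R : realFieldType) (n m : nat) (f : 'I_n -> 'cV[R]_m).

Lemma infmx_quad (d : 'I_n -> bool) (v : 'rV[R]_m) :
  (v *m infmx f d *m v^T) 0 0 = \sum_i (d i)%:R * ((v *m f i) 0 0) ^+ 2.
Proof.
rewrite /infmx mulmx_sumr mulmx_suml summxE; apply: eq_bigr => i _.
rewrite -scalemxAr -scalemxAl mxE; congr (_ * _).
rewrite mulmxA -(mulmxA _ _ v^T) -trmx_mul [v *m f i]mx11_scalar tr_scalar_mx.
by rewrite -scalar_mxM mxE eqxx mulr1n expr2 !mxE eqxx mulr1n.
Qed.

Lemma infmx_psd (d : 'I_n -> bool) (v : 'rV[R]_m) :
  0 <= (v *m infmx f d *m v^T) 0 0.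
Proof.
by rewrite infmx_quad; apply: sumr_ge0 => i _; rewrite mulr_ge0 ?sqr_ge0.
Qed.

Lemma infmx_kernel (d : 'I_n -> bool) (v : 'rV[R]_m) :
  v *m infmx f d = 0 -> forall i, d i -> (v *m f i) 0 0 = 0.
Proof.
move=> vM i di; apply/eqP; rewrite -sqrf_eq0; apply/eqP.
have terms_ge0 j : 0 <= (d j)%:R * ((v *m f j) 0 0) ^+ 2 :> R.
  by rewrite mulr_ge0 ?sqr_ge0.
have /psumr_eq0P /(_ i isT) : \sum_j (d j)%:R * ((v *m f j) 0 0) ^+ 2 = 0 :> R.
  by rewrite -infmx_quad vM mul0mx mxE.
by rewrite di mul1r; apply=> j _.
Qed.

Lemma infmx_sym (d : 'I_n -> bool) : (infmx f d)^T = infmx f d.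
Proof.
rewrite /infmx raddf_sum; apply: eq_bigr => i _.
apply/matrixP => a b; rewrite !mxE; congr (_ * _).
by apply: eq_bigr => k _; rewrite !mxE mulrC.
Qed.

(* If M(d) Sigma = I with Sigma symmetric, then Sigma = Sigma M(d) Sigma is
   positive semidefinite, so all the traces tr(C' Sigma C) are nonnegative. *)
Lemma trace_inverse_ge0 (d : 'I_n -> bool) (Sigma : 'M[R]_m) p (C : 'M[R]_(m, p)) :
  Sigma^T = Sigma -> infmx f d *m Sigma = 1%:M -> 0 <= \tr (C^T *m Sigma *m C).
Proof.
move=> Sigma_sym MSigma; rewrite /mxtrace; apply: sumr_ge0 => j _.
have -> : (C^T *m Sigma *m C) j j = ((col j C)^T *m Sigma *m col j C) 0 0.
  rewrite [LHS]mxE [RHS]mxE; apply: eq_bigr => k _.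
  rewrite [in LHS]mxE [in RHS]mxE [X in _ = _ * X]mxE; congr (_ * _).
  by apply: eq_bigr => l _; rewrite !mxE.
have := infmx_psd d ((col j C)^T *m Sigma).
by rewrite trmx_mul Sigma_sym trmxK mulmxA -(mulmxA _ (infmx f d)) MSigma mulmx1.
Qed.

End InformationMatrix.

Lemma set_extend (T : finType) (A : {set T}) (k : nat) :
  (#|A| <= k <= #|T|)%N -> exists D : {set T}, A \subset D /\ #|D| = k.
Proof.
move Ej: (k - #|A|)%N => j; elim: j A Ej => [|j IH] A Ej /andP[leAk lekT].
  by exists A; split=> //; apply/eqP; rewrite eqn_leq leAk -subn_eq0 Ej.
have : (0 < #|~: A|)%N by have := cardsC A; lia.
rewrite card_gt0 => /set0Pn [x]; rewrite inE => xA.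
have [D [sxAD cardD]] : exists D : {set T}, x |: A \subset D /\ #|D| = k.
  have card_xA : #|x |: A| = #|A|.+1 by rewrite cardsU1 xA.
  by apply: IH; rewrite card_xA; [lia | apply/andP; split; lia].
by exists D; split=> //; apply: subset_trans sxAD; apply: subsetUr.
Qed.

Lemma is_design_set (n N : nat) (D : {set 'I_n}) :
  #|D| = N -> is_design N (fun i => i \in D).
Proof.
move=> <-; rewrite /is_design -sum1_card [RHS]big_mkcond /=.
by apply: eq_bigr => i _; case: (i \in D).
Qed.

Lemma exists_minimizer (R : realDomainType) (T : finType) (P : pred T) (F : T -> R) :
  (exists x, P x) -> exists2 x, P x & forall y, P y -> F x <= F y.
Proof. by case=> x0 Px0; case: (arg_minP F Px0) => x Px minx; exists x. Qed.

Section Designs.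
Variables (R : realFieldType) (n m K : nat) (s : 'I_K -> nat).
Variables (f : 'I_n -> 'cV[R]_m) (B : forall l : 'I_K, 'M[R]_(m, s l)).

(* If the f_i span R^m and m <= N <= n, some design of size N is nonsingular:
   complete m indices of linearly independent f_i to an N-subset. *)
Lemma exists_nonsingular_design (N : nat) :
  (\sum_(i < n) <<(f i)^T>> == 1%:M)%MS -> (m <= N)%N -> (N <= n)%N ->
  exists d, is_design N d /\ infmx f d \in unitmx.
Proof.
move=> /andP[_ span_f] le_mN le_Nn.
pose F := \matrix_(i < n, j < m) f i j 0.
have rowF i : row i F = (f i)^T by apply/rowP => j; rewrite !mxE.
have fullF : row_full F.
  rewrite -sub1mx (submx_trans span_f) //; apply/sumsmx_subP => i _.
  by rewrite genmxE -rowF row_sub.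
pose g := fullrankfun fullF.
have basis_unit : (rowsub g F)^T \in unitmx by rewrite unitmx_tr fullrowsub_unit.
have [D [sgD cardD]] : exists D : {set 'I_n}, [set g k | k : 'I_m] \subset D /\ #|D| = N.
  apply: set_extend; rewrite card_imset; last exact: fullrankfun_inj.
  by rewrite !card_ord le_mN le_Nn.
exists (fun i => i \in D); split; first exact: is_design_set.
rewrite -row_free_unit -kermx_eq0 -submx0; apply/row_subP => r.
set v := row r _.
have vM : v *m infmx f (fun i => i \in D) = 0 by rewrite /v -row_mul mulmx_ker row0.
have vbasis : v *m (rowsub g F)^T = 0.
  apply/rowP => k; rewrite mxE [RHS]mxE.
  transitivity ((v *m f (g k)) 0 0).
    by rewrite [RHS]mxE; apply: eq_bigr => j _; rewrite !mxE.
  by apply: (infmx_kernel vM); apply: (subsetP sgD); apply: imset_f.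
by rewrite -(mulmxK basis_unit v) vbasis mul0mx sub0mx.
Qed.

Lemma exists_Phi_optimal (N : nat) :
  (\sum_(i < n) <<(f i)^T>> == 1%:M)%MS -> (m <= N)%N -> (N <= n)%N ->
  exists d, Phi_optimal f B N d.
Proof.
move=> span_f le_mN le_Nn.
have ffun_design (d : 'I_n -> bool) : is_design N (finfun d) = is_design N d.
  by congr (_ = _); apply: eq_bigr => i _; rewrite ffunE.
have ffun_infmx (d : 'I_n -> bool) : infmx f (finfun d) = infmx f d.
  by apply: eq_bigr => i _; rewrite ffunE.
pose admissible := [pred d : {ffun 'I_n -> bool} |
  ((\sum_i (d i : nat))%N == N) && (infmx f d \in unitmx)].
have admissibleP (d : 'I_n -> bool) :
    is_design N d -> infmx f d \in unitmx -> admissible (finfun d).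
  by rewrite -ffun_design -ffun_infmx => d_design d_unit; rewrite inE /= d_design eqxx.
have [d /andP[/eqP d_design d_unit] d_min] : exists2 d, admissible d &
    forall d', admissible d' -> PhiB B (infmx f d) <= PhiB B (infmx f d').
  apply: exists_minimizer.
  have [d0 [d0_design d0_unit]] := exists_nonsingular_design span_f le_mN le_Nn.
  by exists (finfun d0); apply: admissibleP.
exists d; split=> // d' d'_design d'_unit.
by rewrite -(ffun_infmx d'); apply: d_min; apply: admissibleP.
Qed.

End Designs.

Lemma linearized_product_eq (R : realFieldType) (b : bool) (z c l u : R) :
  0 <= z - b%:R * l -> 0 <= z - b%:R * u - c + u ->
  z - b%:R * u <= 0 -> z - b%:R * l - c + l <= 0 -> z = b%:R * c.
Proof. by case: b; rewrite ?mul1r ?mul0r; lra. Qed.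

Lemma linearized_product_bounds (R : realFieldType) (b : bool) (c l u : R) :
  l <= c <= u ->
  [/\ 0 <= b%:R * c - b%:R * l, 0 <= b%:R * c - b%:R * u - c + u,
      b%:R * c - b%:R * u <= 0 & b%:R * c - b%:R * l - c + l <= 0].
Proof. by case/andP; case: b; rewrite ?mul1r ?mul0r; split; lra. Qed.

Section Reformulation.
Variables (R : realFieldType) (n m N K : nat) (s : 'I_K -> nat).
Variables (f : 'I_n -> 'cV[R]_m) (B : forall l : 'I_K, 'M[R]_(m, s l)) (L U : 'M[R]_m).

Lemma feasible_structure phi Z Sigma d :
  milp_feasible f B N L U phi Z Sigma d ->
  [/\ forall (i : 'I_n) (j k : 'I_m), Z i j k = (d i)%:R * Sigma j k,
      infmx f d \in unitmx & Sigma = invmx (infmx f d)].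
Proof.
case=> _ _ moment_eq _ bounds.
have Z_eq i j k : Z i j k = (d i)%:R * Sigma j k.
  by have [] := bounds i j k; apply: linearized_product_eq.
have MSigma : infmx f d *m Sigma = 1%:M.
  rewrite -moment_eq /infmx mulmx_suml; apply: eq_bigr => i _.
  have -> : Z i = (d i)%:R *: Sigma by apply/matrixP => j k; rewrite mxE Z_eq.
  by rewrite -scalemxAl scalemxAr.
have [M_unit _] := mulmx1_unit MSigma.
by split=> //; rewrite -(mulKmx M_unit Sigma) MSigma mulmx1.
Qed.

Lemma feasible_PhiB_le phi Z Sigma d : (0 < K)%N ->
  milp_feasible f B N L U phi Z Sigma d -> PhiB B (infmx f d) <= phi.
Proof.
move=> K_gt0 feas; have [_ M_unit Sigma_eq] := feasible_structure feas.
case: feas => Sigma_sym tr_le _ _ _.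
have MSigma : infmx f d *m Sigma = 1%:M by rewrite Sigma_eq mulmxV.
rewrite /PhiB -Sigma_eq; apply: bigmax_le => [|l _]; last exact: tr_le.
exact: le_trans (trace_inverse_ge0 _ Sigma_sym MSigma) (tr_le (Ordinal K_gt0)).
Qed.

Lemma design_feasible d :
  (forall j k : 'I_m, L j k <= invmx (infmx f d) j k <= U j k) ->
  is_design N d -> infmx f d \in unitmx ->
  milp_feasible f B N L U (PhiB B (infmx f d))
    (fun i => (d i)%:R *: invmx (infmx f d)) (invmx (infmx f d)) d.
Proof.
move=> inv_bounds d_design M_unit; split=> //.
- by rewrite trmx_inv infmx_sym.
- by move=> l; apply: (le_bigmax _ (fun l => \tr ((B l)^T *m invmx (infmx f d) *m B l))).
- rewrite -(mulmxV M_unit) /infmx mulmx_suml; apply: eq_bigr => i _.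
  by rewrite -scalemxAl scalemxAr.
- by move=> i j k; rewrite mxE; apply: linearized_product_bounds.
Qed.

Hypothesis K_gt0 : (0 < K)%N.
Hypothesis inv_bounds : forall d : 'I_n -> bool, Phi_optimal f B N d ->
  forall j k : 'I_m, L j k <= invmx (infmx f d) j k <= U j k.

Lemma Phi_optimal_lower_bound dstar : Phi_optimal f B N dstar ->
  forall phi Z Sigma d, milp_feasible f B N L U phi Z Sigma d ->
    PhiB B (infmx f dstar) <= phi.
Proof.
move=> [_ _ dstar_min] phi Z Sigma d feas.
have [_ M_unit _] := feasible_structure feas.
have d_design : is_design N d by case: feas.
exact: le_trans (dstar_min d d_design M_unit) (feasible_PhiB_le K_gt0 feas).
Qed.

Lemma Phi_optimal_milp_optimal dstar : Phi_optimal f B N dstar ->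
  milp_optimal f B N L U (PhiB B (infmx f dstar))
    (fun i => (dstar i)%:R *: invmx (infmx f dstar)) (invmx (infmx f dstar)) dstar.
Proof.
move=> opt; split; last exact: Phi_optimal_lower_bound.
by case: (opt) => d_design M_unit _; apply: design_feasible => //; apply: inv_bounds.
Qed.

(* Once some Phi_B-optimal design d0 exists, the design d of any optimal
   solution is Phi_B-optimal: Phi_B(M(d)) <= phi <= Phi_B(M(d0)). *)
Lemma milp_optimal_Phi_optimal phi Z Sigma d dstar :
  Phi_optimal f B N dstar -> milp_optimal f B N L U phi Z Sigma d ->
  Phi_optimal f B N d.
Proof.
move=> dstar_opt [feas phi_min].
have [_ M_unit _] := feasible_structure feas.
have d_design : is_design N d by case: feas.
split=> // d' d'_design d'_unit.
apply: le_trans (feasible_PhiB_le K_gt0 feas) _.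
apply: le_trans (phi_min _ _ _ _ (proj1 (Phi_optimal_milp_optimal dstar_opt))) _.
by case: dstar_opt => _ _; apply.
Qed.

End Reformulation.

Unset Implicit Arguments. Set Strict Implicit.

Theorem mainTheorem7 (R : realFieldType) (n m N K : nat) (s : 'I_K -> nat)
  (f : 'I_n -> 'cV[R]_m) (B : forall l : 'I_K, 'M[R]_(m, s l)) (L U : 'M[R]_m) :
  (2 <= m)%N -> (m <= N)%N -> (N <= n)%N -> (0 < K)%N ->
  (* f_1, ..., f_n span R^m *)
  (\sum_(i < n) <<(f i)^T>> == 1%:M)%MS ->
  (* the column space of B = (B_1, ..., B_K) is R^m *)
  (\sum_(l < K) <<(B l)^T>> == 1%:M)%MS ->
  (* B has no zero column *)
  (forall (l : 'I_K) (j : 'I_(s l)), col j (B l) != 0) ->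
  (forall j k : 'I_m, L j k <= U j k) ->
  (forall d : 'I_n -> bool, Phi_optimal f B N d ->
     forall j k : 'I_m, L j k <= invmx (infmx f d) j k <= U j k) ->
  (* (i) *)
  (forall phi Z Sigma d, milp_feasible f B N L U phi Z Sigma d ->
     [/\ forall (i : 'I_n) (j k : 'I_m), Z i j k = (d i)%:R * Sigma j k,
         infmx f d \in unitmx &
         Sigma = invmx (infmx f d)]) /\
  (* (ii) *)
  ((exists d, Phi_optimal f B N d) /\
   (forall dstar, Phi_optimal f B N dstar ->
      (forall phi Z Sigma d, milp_feasible f B N L U phi Z Sigma d ->
         PhiB B (infmx f dstar) <= phi) /\
      (exists phi Z Sigma d, milp_optimal f B N L U phi Z Sigma d /\
         phi = PhiB B (infmx f dstar))) /\
   (forall d : 'I_n -> bool,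
      (exists phi Z Sigma, milp_optimal f B N L U phi Z Sigma d) <->
      Phi_optimal f B N d)).
Proof.
move=> _ le_mN le_Nn K_gt0 span_f _ _ _ inv_bounds.
split; first by move=> phi Z Sigma d; apply: feasible_structure.
have [dstar dstar_opt] := exists_Phi_optimal B span_f le_mN le_Nn.
split; first by exists dstar.
split.
  move=> d opt; split; first exact: Phi_optimal_lower_bound.
  by do 4 eexists; split; first exact (Phi_optimal_milp_optimal K_gt0 inv_bounds opt).
move=> d; split.
  by case=> phi [Z [Sigma opt]]; exact: milp_optimal_Phi_optimal K_gt0 inv_bounds _ _ _ _ _ dstar_opt opt.
by move=> opt; do 3 eexists; exact (Phi_optimal_milp_optimal K_gt0 inv_bounds opt).
Qed.
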